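(* Let $G$ be a finite group and let $H \le G$ be a subgroup with $H \neq \{e\}$. Let $C_1, \ldots, C_k$ denote the non-identity conjugacy classes of $G$. Then \[ \sum_{i=1}^k \frac{|C_i \cap H|^2}{|H|\,|C_i|} \;<\; D_H \;\le\; \sum_{i=1}^k |C_i \cap H|\,|C_i|^{-1/2}. \]
   Context: For a finite group $G$, let $\mathrm{Irr}(G)$ be the set of complex irreducible characters of $G$, and for $\chi \in \mathrm{Irr}(G)$ let $d_\chi = \chi(e)$ be its degree. For a subgroup $H \le G$ define the probability distribution $P_H$ on $\mathrm{Irr}(G)$ by $P_H(\chi) = \frac{d_\chi}{|G|}\sum_{h \in H}\chi(h)$ (the distribution obtained by weak quantum Fourier sampling), and define the total variation ($L_1$) distance \[ D_H = \sum_{\chi \in \mathrm{Irr}(G)} |P_H(\chi) - P_{\{e\}}(\chi)| = \frac{1}{|G|}\sum_{\chi \in \mathrm{Irr}(G)} d_\chi \Big|\sum_{h \in H,\, h \neq e} \chi(h)\Big|. \] *)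

From HB Require Import structures.
From mathcomp Require Import all_boot all_order all_algebra all_fingroup all_field all_character.
Set Implicit Arguments. Unset Strict Implicit. Unset Printing Implicit Defensive.
Import Order.TTheory GRing.Theory Num.Theory.
Local Open Scope ring_scope.

Definition PH (gT : finGroupType) (G H : {group gT}) (i : Iirr G) : algC :=
  ('chi[G]_i 1%g / #|G|%:R) * \sum_(h in H) 'chi[G]_i h.

Definition DH (gT : finGroupType) (G H : {group gT}) : algC :=
  \sum_(i : Iirr G) `| PH H i - PH 1%G i |.

From HB Require Import structures.
From mathcomp Require Import all_boot all_order all_algebra all_fingroup all_field all_character.
From mathcomp Require Import ring.
Import Order.TTheory GRing.Theory Num.Theory.
Local Open Scope group_scope.
Local Open Scope ring_scope.

(* Write a_i for the sum of chi_i over H minus the identity, so that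
   D_H = |G|^-1 sum_i chi_i(1) |a_i|.  The second orthogonality relation gives
   sum_i |a_i|^2 = sum_{h in H^#} |C_G(h)| |h^G cap H|, which is |G||H| times the
   left-hand side; since |a_i| <= (|H| - 1) chi_i(1), that sum is at most
   (|H| - 1) |G| D_H, whence the strict lower bound.  For the upper bound,
   AM-GM with weight sqrt|h^G| and both orthogonality relations give
   sum_i chi_i(1) |chi_i(h)| <= |G| / sqrt|h^G| for every h. *)

Lemma mulr_le_mean_scaled {R : numFieldType} (x y s : R) :
  0 <= x -> 0 <= y -> 0 < s -> x * y *+ 2 <= x ^+ 2 / s + s * y ^+ 2.
Proof.
move=> x_ge0 y_ge0 s_gt0; rewrite -subr_ge0.
have -> : x ^+ 2 / s + s * y ^+ 2 - x * y *+ 2 = (x - s * y) ^+ 2 / s.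
  by field; rewrite gt_eqF.
have s_ge0 := ltW s_gt0.
by apply: divr_ge0 => //; rewrite -realEsqr rpredB ?ger0_real ?mulr_ge0.
Qed.

Lemma card_cent1_class {gT : finGroupType} (G : {group gT}) (h : gT) :
  #|G|%:R = #|'C_G[h]|%:R * #|h ^: G|%:R :> algC.
Proof. by rewrite -natrM -index_cent1 Lagrange // subsetIl. Qed.

Lemma card_class_gt0 {gT : finGroupType} (G : {group gT}) (h : gT) :
  (0 < #|h ^: G|)%N.
Proof. by apply/card_gt0P; exists h; apply: class_refl. Qed.

Lemma sum_irr1_norm_le {gT : finGroupType} (G : {group gT}) (h : gT) :
  h \in G -> \sum_i 'chi[G]_i 1%g * `|'chi_i h| <= #|G|%:R / sqrtC #|h ^: G|%:R.
Proof.
move=> Gh; set s := sqrtC _.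
have s_gt0 : 0 < s by rewrite sqrtC_gt0 ltr0n card_class_gt0.
have sum_sq_h : \sum_i `|'chi[G]_i h| ^+ 2 = #|'C_G[h]|%:R.
  under eq_bigr do rewrite normCK.
  by rewrite second_orthogonality_relation // class_refl.
have am_gm i : 'chi[G]_i 1%g * `|'chi_i h| *+ 2 <= 'chi_i 1%g ^+ 2 / s + s * `|'chi_i h| ^+ 2.
  by rewrite mulr_le_mean_scaled ?normr_ge0 ?char1_ge0 ?irr_char.
rewrite -(ler_pMn2r (isT : (0 < 2)%N)) -sumrMnl.
apply: le_trans (ler_sum _ (fun i _ => am_gm i)) _.
rewrite big_split /= -mulr_suml -mulr_sumr irr_sum_square sum_sq_h.
rewrite (card_cent1_class G h) -(sqrtCK #|h ^: G|%:R) -/s.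
rewrite [_ / s](_ : _ = s * #|'C_G[h]|%:R) ?mulr2n //.
by field; rewrite gt_eqF.
Qed.

Section NontrivialSums.

Context {gT : finGroupType} (G H : {group gT}).

Definition irr_sum_nt (i : Iirr G) : algC := \sum_(h in H^#) 'chi[G]_i h.

Lemma DH_E : DH G H = #|G|%:R^-1 * \sum_i 'chi[G]_i 1%g * `|irr_sum_nt i|.
Proof.
rewrite /DH mulr_sumr; apply: eq_bigr => i _.
rewrite /PH (big_setD1 1%g (group1 H)) big_set1 /= mulrDr addrAC subrr add0r normrM.
rewrite ger0_norm ?divr_ge0 ?ler0n ?char1_ge0 ?irr_char //; ring.
Qed.

Lemma norm_irr_sum_nt_le i : `|irr_sum_nt i| <= (#|H|%:R - 1) * 'chi[G]_i 1%g.
Proof.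
apply: le_trans (ler_norm_sum _ _ _) _.
rewrite (cardsD1 1%g H) group1 natrD addrAC subrr add0r mulr_natl -sumr_const.
by apply: ler_sum => h _; apply: char1_ge_norm (irr_char i).
Qed.

Hypothesis sHG : H \subset G.

Lemma sum_classes_setD1 (Phi : {set gT} -> algC) :
  \sum_(h in H^#) Phi (h ^: G) = \sum_(C in classes G | C != 1%g) #|C :&: H|%:R * Phi C.
Proof.
rewrite (partition_big (fun h => h ^: G) [pred C | (C \in classes G) && (C != 1%g)]) /=.
  apply: eq_bigr => _ /andP[/imsetP[x Gx ->] ntxG].
  rewrite mulr_natl -sumr_const; apply: eq_big => [h | h /andP[_ /eqP ->] //].
  rewrite !inE andbAC; congr (_ && _).
  apply/andP/class_eqP => [[_ /eqP //] | hxG]; split; last by rewrite hxG.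
  by apply: contraNneq ntxG => h1; rewrite -hxG h1 class1G.
move=> h /setD1P[nth Hh]; rewrite mem_classes ?(subsetP sHG) //=.
by apply: contra nth => /eqP hG1; have := class_refl G h; rewrite hG1 => /set1P ->.
Qed.

Lemma sum_norm_irr_sum_nt_sq :
  \sum_i `|irr_sum_nt i| ^+ 2 = \sum_(h in H^#) #|'C_G[h]|%:R * #|h ^: G :&: H|%:R.
Proof.
transitivity (\sum_i \sum_(h in H^#) \sum_(k in H^#) 'chi[G]_i h * ('chi_i k)^*).
  apply: eq_bigr => i _; rewrite normCK /irr_sum_nt rmorph_sum mulr_suml.
  by apply: eq_bigr => h _; rewrite mulr_sumr.
rewrite exchange_big; apply: eq_bigr => h /setD1P[nth Hh] /=; rewrite exchange_big.
under eq_bigr => k /setD1P[_ Hk].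
  rewrite second_orthogonality_relation ?(subsetP sHG) // class_sym mulrb.
  over.
rewrite -big_mkcondr sumr_const mulr_natr; congr (_ *+ _).
apply: eq_card => k; rewrite -topredE /= !inE andbC andbA; congr (_ && _).
rewrite andb_idr // => kG; apply: contraNneq nth => k1.
by move: kG; rewrite k1 class_sym class1G inE.
Qed.

Lemma sum_classes_sq_ratio_E :
  \sum_(C in classes G | C != 1%g) (#|C :&: H|%:R ^+ 2 / (#|H|%:R * #|C|%:R))
    = (#|G|%:R * #|H|%:R)^-1 * \sum_i `|irr_sum_nt i| ^+ 2.
Proof.
under eq_bigr do rewrite expr2 -mulrA.
rewrite -sum_classes_setD1 sum_norm_irr_sum_nt_sq mulr_sumr.
apply: eq_bigr => h _; rewrite (card_cent1_class G h).
have card_neq0 (A : {set gT}) : (0 < #|A|)%N -> #|A|%:R != 0 :> algC.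
  by rewrite pnatr_eq0 -lt0n.
by field; rewrite ?mulf_neq0 ?card_neq0 ?cardG_gt0 ?card_class_gt0.
Qed.

Lemma sum_classes_inv_sqrt_E :
  \sum_(C in classes G | C != 1%g) (#|C :&: H|%:R / sqrtC #|C|%:R)
    = #|G|%:R^-1 * \sum_(h in H^#) #|G|%:R / sqrtC #|h ^: G|%:R :> algC.
Proof.
rewrite -sum_classes_setD1 mulr_sumr; apply: eq_bigr => h _.
by rewrite mulrA mulVf ?mul1r ?pnatr_eq0 -?lt0n ?cardG_gt0.
Qed.

Lemma sum_norm_irr_sum_nt_sq_le :
  \sum_i `|irr_sum_nt i| ^+ 2 <= (#|H|%:R - 1) * \sum_i 'chi[G]_i 1%g * `|irr_sum_nt i|.
Proof.
rewrite mulr_sumr; apply: ler_sum => i _; rewrite expr2 mulrA.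
by rewrite ler_wpM2r ?normr_ge0 ?norm_irr_sum_nt_le.
Qed.

Lemma sum_irr1_norm_irr_sum_nt_le :
  \sum_i 'chi[G]_i 1%g * `|irr_sum_nt i| <= \sum_(h in H^#) #|G|%:R / sqrtC #|h ^: G|%:R.
Proof.
apply: le_trans (_ : \sum_i \sum_(h in H^#) 'chi[G]_i 1%g * `|'chi_i h| <= _).
  apply: ler_sum => i _; rewrite -mulr_sumr ler_wpM2l ?char1_ge0 ?irr_char //.
  exact: ler_norm_sum.
rewrite exchange_big /=; apply: ler_sum => h /setD1P[_ Hh].
exact: sum_irr1_norm_le (subsetP sHG h Hh).
Qed.

Hypothesis ntH : H :!=: 1%g.

Lemma sum_irr1_norm_irr_sum_nt_gt0 : 0 < \sum_i 'chi[G]_i 1%g * `|irr_sum_nt i|.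
Proof.
rewrite (bigD1 0) //= ltr_wpDr ?sumr_ge0 // => [i _|].
  by rewrite mulr_ge0 ?char1_ge0 ?irr_char.
have -> : irr_sum_nt 0 = #|H^#|%:R.
  rewrite /irr_sum_nt -sumr_const; apply: eq_bigr => h /setD1P[_ Hh].
  by rewrite irr0 cfun1E (subsetP sHG).
rewrite irr0 cfun1E group1 mul1r normr_nat ltr0n -ltnS.
by have := cardsD1 1%g H; rewrite group1 add1n => <-; rewrite cardG_gt1.
Qed.

End NontrivialSums.

Theorem theorem1 (gT : finGroupType) (G H : {group gT}) :
  H \subset G -> H :!=: 1%g ->
  \sum_(C in classes G | C != 1%g) (#|C :&: H|%:R ^+ 2 / (#|H|%:R * #|C|%:R))
    < DH G H
  /\ DH G H <= \sum_(C in classes G | C != 1%g) (#|C :&: H|%:R / sqrtC #|C|%:R) :> algC.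
Proof.
move=> sHG ntH; rewrite sum_classes_sq_ratio_E // sum_classes_inv_sqrt_E // DH_E.
have G_gt0 : 0 < #|G|%:R :> algC by rewrite ltr0n cardG_gt0.
have H_gt0 : 0 < #|H|%:R :> algC by rewrite ltr0n cardG_gt0.
have := sum_norm_irr_sum_nt_sq_le G H.
have := sum_irr1_norm_irr_sum_nt_le G H sHG.
have := sum_irr1_norm_irr_sum_nt_gt0 G H sHG ntH.
set S := \sum_i _ * _ => S_gt0 S_le sq_le; split.
  apply: le_lt_trans (ler_wpM2l _ sq_le) _; first by rewrite invr_ge0 mulr_ge0 ?ltW.
  rewrite -subr_gt0.
  have -> : #|G|%:R^-1 * S - (#|G|%:R * #|H|%:R)^-1 * ((#|H|%:R - 1) * S)
            = (#|G|%:R * #|H|%:R)^-1 * S by field; rewrite !gt_eqF.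
  by rewrite mulr_gt0 // invr_gt0 mulr_gt0.
by apply: ler_wpM2l S_le; rewrite invr_ge0 ltW.
Qed.
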